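(* Let $f:\mathbb{R}^d\to\mathbb{R}$ be twice differentiable and suppose there is $M>0$ with $\|\nabla^2 f(x)-\nabla^2 f(y)\|_{\mathrm{op}}\le M\|x-y\|$ for all $x,y$. Let $(x_k)_{k\in\mathbb{N}}$ be generated by the inner iteration described in the context. Then for all $k\ge1$, $$\|\nabla f(\bar x_k)\|\le\|\bar g_k\|+\frac{M}{8}kS_k.$$
   Context: Inner iteration (parameters $\sigma,\delta>0$, $\theta\in(0,1)$): given $x_0\in\mathbb{R}^d$ and a real symmetric matrix $B_0$, for $k=0,1,\dots$: let $m_k(s):=\langle \nabla f(x_k)+\frac{1}{k+1}\sum_{i=0}^k(2i+1)\nabla f(x_i),s\rangle+\frac12\langle B_ks,s\rangle+\frac{\sigma}{4}\|s\|^4$; choose any $s_k$ with $\|\nabla m_k(s_k)\|\le\delta\|s_k\|$; set $x_{k+1}=x_k+s_k$, $r_k=\nabla f(x_{k+1})-\nabla f(x_k)-B_ks_k$, and $B_{k+1}=\frac{1-\theta}{1+\theta}\big(B_k+\frac{r_ks_k^\top+s_kr_k^\top}{\|s_k\|^2}-\frac{\langle r_k,s_k\rangle}{\|s_k\|^4}s_ks_k^\top\big)$. Definitions for $k\ge1$: $\bar x_k:=\frac{1}{k(k+1)}\big(\sum_{i=0}^{k-1}(2i+1)x_i+kx_k\big)$, $\bar g_k:=\frac{1}{k(k+1)}\big(\sum_{i=0}^{k-1}(2i+1)\nabla f(x_i)+k\nabla f(x_k)\big)$, and $S_k:=\sum_{i=0}^{k-1}\|s_i\|^2$. *)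

From HB Require Import structures.
From mathcomp Require Import all_boot all_order all_algebra.
From mathcomp Require Import all_classical all_reals all_analysis.
Set Implicit Arguments. Unset Strict Implicit. Unset Printing Implicit Defensive.
Import Order.TTheory GRing.Theory Num.Theory.
Import numFieldNormedType.Exports.
Local Open Scope classical_set_scope.
Local Open Scope ring_scope.

Section Defs.
Variables (R : realType) (d : nat).
Notation vec := 'cV[R]_d.

Definition dotp (u v : vec) : R := \sum_(i < d) u i 0 * v i 0.
Definition enorm (v : vec) : R := Num.sqrt (dotp v v).

Definition opnorm (A : 'M[R]_d) : R :=
  sup [set enorm (A *m v) | v in [set v : vec | enorm v <= 1]].

Definition grad (f : vec -> R) (x : vec) : vec :=
  \col_(i < d) ('d f x (delta_mx i 0 : vec)).

(* Hessian: hess f x i j = d/dx_j (d f / dx_i) *)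
Definition hess (f : vec -> R) (x : vec) : 'M[R]_d :=
  \matrix_(i < d, j < d) (('d (grad f) x (delta_mx j 0 : vec)) i 0).

Definition twice_differentiable (f : vec -> R) : Prop :=
  forall x, differentiable f x /\ differentiable (grad f) x.

Definition model (f : vec -> R) (sigma : R) (x : nat -> vec) (B : nat -> 'M[R]_d)
    (k : nat) (s : vec) : R :=
  dotp (grad f (x k) + (k.+1%:R)^-1 *: \sum_(i < k.+1) (2 * i + 1)%:R *: grad f (x i)) s
  + 2^-1 * dotp (B k *m s) s + sigma / 4 * enorm s ^+ 4.

Definition resid (f : vec -> R) (x : nat -> vec) (s : nat -> vec) (B : nat -> 'M[R]_d)
    (k : nat) : vec :=
  grad f (x k.+1) - grad f (x k) - B k *m s k.

Definition Bupdate (theta : R) (Bk : 'M[R]_d) (r s : vec) : 'M[R]_d :=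
  ((1 - theta) / (1 + theta)) *:
    (Bk + (enorm s ^+ 2)^-1 *: (r *m s^T + s *m r^T)
        - (dotp r s / enorm s ^+ 4) *: (s *m s^T)).

Definition inner_iteration (f : vec -> R) (sigma delta theta : R)
    (x s : nat -> vec) (B : nat -> 'M[R]_d) : Prop :=
  [/\ (B 0%N)^T = B 0%N,
      forall k, enorm (grad (model f sigma x B k) (s k)) <= delta * enorm (s k),
      forall k, x k.+1 = x k + s k &
      forall k, B k.+1 = Bupdate theta (B k) (resid f x s B k) (s k)].

Definition xbar (x : nat -> vec) (k : nat) : vec :=
  ((k * k.+1)%:R)^-1 *: (\sum_(i < k) (2 * i + 1)%:R *: x i + k%:R *: x k).

Definition gbar (f : vec -> R) (x : nat -> vec) (k : nat) : vec :=
  ((k * k.+1)%:R)^-1 *: (\sum_(i < k) (2 * i + 1)%:R *: grad f (x i) + k%:R *: grad f (x k)).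

Definition Ssum (s : nat -> vec) (k : nat) : R := \sum_(i < k) enorm (s i) ^+ 2.

End Defs.

(* Write xbar_k = sum_i w_i x_i and gbar_k = sum_i w_i grad f(x_i) with the convex weights
   w_i = (2i+1)/(k(k+1)) for i < k and w_k = 1/(k+1).  The linearisations of grad f at xbar_k
   average out, so grad f(xbar_k) - gbar_k is the weighted mean of the Taylor remainders, each
   at most (M/2)|x_i - xbar_k|^2 because the Hessian is M-Lipschitz.  The weighted variance
   sum_i w_i |x_i - xbar_k|^2 is half the weighted mean of the squared pairwise distances; by
   Cauchy-Schwarz along the path, |x_i - x_j|^2 <= k * sum of |s_l|^2 over the steps l between
   i and j, and for a fixed step l the pairs it separates carry weight 2A(1-A) <= 1/2, where
   A = sum_(i <= l) w_i.  Hence the variance is at most (k/4) S_k. *)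

From HB Require Import structures.
From mathcomp Require Import all_boot all_order all_algebra.
From mathcomp Require Import all_classical all_reals all_analysis.
From mathcomp Require Import ring lra zify.
Set Implicit Arguments. Unset Strict Implicit. Unset Printing Implicit Defensive.
Import Order.TTheory GRing.Theory Num.Theory.
Import numFieldNormedType.Exports.
Local Open Scope ring_scope.

Section Euclidean.
Variables (R : realType) (d : nat).
Notation vec := 'cV[R]_d.
Implicit Types (u v w : vec) (a : R).

Lemma dotpC u v : dotp u v = dotp v u.
Proof. by apply: eq_bigr => i _; rewrite mulrC. Qed.

Lemma dotpDl u v w : dotp (u + v) w = dotp u w + dotp v w.
Proof. by rewrite /dotp -big_split; apply: eq_bigr => i _; rewrite !mxE mulrDl. Qed.

Lemma dotpZl a u v : dotp (a *: u) v = a * dotp u v.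
Proof. by rewrite /dotp mulr_sumr; apply: eq_bigr => i _; rewrite !mxE mulrA. Qed.

Lemma dotpBl u v w : dotp (u - v) w = dotp u w - dotp v w.
Proof. by rewrite -scaleN1r dotpDl dotpZl mulN1r. Qed.

Lemma dotpDr u v w : dotp u (v + w) = dotp u v + dotp u w.
Proof. by rewrite dotpC dotpDl !(dotpC u). Qed.

Lemma dotpZr a u v : dotp u (a *: v) = a * dotp u v.
Proof. by rewrite dotpC dotpZl dotpC. Qed.

Lemma dotpBr u v w : dotp u (v - w) = dotp u v - dotp u w.
Proof. by rewrite dotpC dotpBl !(dotpC u). Qed.

Lemma dotp0l u : dotp 0 u = 0.
Proof. by rewrite -(scale0r 0) dotpZl mul0r. Qed.

Lemma dotp0r u : dotp u 0 = 0.
Proof. by rewrite dotpC dotp0l. Qed.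

Lemma dotp_sumr I (r : seq I) (P : pred I) (F : I -> vec) u :
  dotp u (\sum_(i <- r | P i) F i) = \sum_(i <- r | P i) dotp u (F i).
Proof. by elim/big_rec2: _ => [|i y1 y2 _ <-]; rewrite ?dotp0r ?dotpDr. Qed.

Lemma dotpp_ge0 u : 0 <= dotp u u.
Proof. by apply: sumr_ge0 => i _; rewrite -expr2 sqr_ge0. Qed.

Lemma dotpp_eq0 u : (dotp u u == 0) = (u == 0).
Proof.
apply/idP/eqP => [|->]; last by rewrite dotp0l.
rewrite psumr_eq0 => [/allP u0|i _]; last by rewrite -expr2 sqr_ge0.
apply/matrixP => i j; rewrite (ord1 j) mxE.
by apply/eqP; rewrite -[_ == 0]orbb -mulf_eq0; exact: u0 (mem_index_enum _).
Qed.

Lemma enorm_ge0 u : 0 <= enorm u.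
Proof. exact: sqrtr_ge0. Qed.

Lemma sqr_enorm u : enorm u ^+ 2 = dotp u u.
Proof. by rewrite sqr_sqrtr // dotpp_ge0. Qed.

Lemma enorm_eq0 u : (enorm u == 0) = (u == 0).
Proof. by rewrite sqrtr_eq0 -dotpp_eq0 eq_le dotpp_ge0 andbT. Qed.

Lemma enorm0 : enorm (0 : vec) = 0.
Proof. by apply/eqP; rewrite enorm_eq0. Qed.

Lemma enormZ a u : enorm (a *: u) = `|a| * enorm u.
Proof. by rewrite /enorm dotpZl dotpZr mulrA -expr2 sqrtrM ?sqrtr_sqr ?sqr_ge0. Qed.

Lemma enormN u : enorm (- u) = enorm u.
Proof. by rewrite -scaleN1r enormZ normrN1 mul1r. Qed.

Lemma enorm_distC u v : enorm (u - v) = enorm (v - u).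
Proof. by rewrite -enormN opprB. Qed.

Lemma enorm_le_sqr u a : 0 <= a -> dotp u u <= a ^+ 2 -> enorm u <= a.
Proof. by move=> a0 ua; rewrite -(ger0_norm a0) -sqrtr_sqr ler_wsqrtr. Qed.

Lemma dotp_le_enorm u v : dotp u v <= enorm u * enorm v.
Proof.
have [->|u0] := eqVneq u 0; first by rewrite dotp0l enorm0 mul0r.
set a := dotp u u; set b := dotp u v; set c := dotp v v.
have a_gt0 : 0 < a by rewrite lt_def dotpp_eq0 u0 dotpp_ge0.
have discr : 0 <= a * (a * c - b ^+ 2).
  have := dotpp_ge0 (a *: v - b *: u).
  rewrite !(dotpBl, dotpBr, dotpZl, dotpZr) (dotpC v u) -/a -/b -/c.
  by congr (0 <= _); ring.
have [b_le0|b_gt0] := lerP b 0; first by rewrite (le_trans b_le0) ?mulr_ge0 ?enorm_ge0.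
rewrite -sqrtrM ?dotpp_ge0 // -(ger0_norm (ltW b_gt0)) -sqrtr_sqr ler_wsqrtr //.
by rewrite -subr_ge0 -(pmulr_rge0 _ a_gt0).
Qed.

Lemma normr_dotp_le u v : `|dotp u v| <= enorm u * enorm v.
Proof.
rewrite ler_norml dotp_le_enorm andbT lerNl -mulN1r -dotpZl.
by rewrite (le_trans (dotp_le_enorm _ _)) // enormZ normrN1 mul1r.
Qed.

Lemma ler_enormD u v : enorm (u + v) <= enorm u + enorm v.
Proof.
apply: enorm_le_sqr; first by rewrite addr_ge0 ?enorm_ge0.
rewrite dotpDl !dotpDr sqrrD !sqr_enorm (dotpC v u).
have := dotp_le_enorm u v; lra.
Qed.

Lemma ler_enorm_sum I (r : seq I) (P : pred I) (F : I -> vec) :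
  enorm (\sum_(i <- r | P i) F i) <= \sum_(i <- r | P i) enorm (F i).
Proof.
apply: (big_ind2 (fun u a => enorm u <= a)) => [|u a v b ua vb|//].
  by rewrite enorm0.
exact: le_trans (ler_enormD u v) (lerD ua vb).
Qed.

Lemma ler_coord_enorm u i : `|u i 0| <= enorm u.
Proof.
rewrite -sqrtr_sqr ler_wsqrtr // /dotp (bigD1 i) //= -expr2 lerDl.
by apply: sumr_ge0 => j _; rewrite -expr2 sqr_ge0.
Qed.

Lemma enorm_le_sum_abs u : enorm u <= \sum_i `|u i 0|.
Proof.
apply: enorm_le_sqr; first exact: sumr_ge0.
rewrite expr2 mulr_suml; apply: ler_sum => i _.
rewrite (le_trans (ler_norm _)) // normrM ler_wpM2l //.
by rewrite (bigD1 i) //= lerDl sumr_ge0.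
Qed.

Lemma enorm_mulmx_le (A : 'M[R]_d) v : enorm (A *m v) <= opnorm A * enorm v.
Proof.
have [->|v0] := eqVneq v 0; first by rewrite mulmx0 enorm0 mulr0.
have nv_gt0 : 0 < enorm v by rewrite lt_def enorm_eq0 v0 enorm_ge0.
have bounded : has_ubound [set enorm (A *m v) | v in [set v : vec | enorm v <= 1]].
  exists (\sum_i \sum_j `|A i j|) => _ [w /= w1 <-].
  apply: (le_trans (enorm_le_sum_abs _)); apply: ler_sum => i _.
  rewrite mxE (le_trans (ler_norm_sum _ _ _)) //; apply: ler_sum => j _.
  by rewrite normrM ler_piMr // (le_trans (ler_coord_enorm _ _)).
rewrite -ler_pdivrMr // mulrC -[(enorm v)^-1]ger0_norm ?invr_ge0 ?enorm_ge0 //.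
rewrite -enormZ scalemxAr; apply: ub_le_sup => //=.
exists ((enorm v)^-1 *: v) => //=.
by rewrite enormZ ger0_norm ?invr_ge0 ?enorm_ge0 // mulVf ?gt_eqF.
Qed.

End Euclidean.

Lemma sqr_sum_le (R : realType) n (b : 'I_n -> R) :
  (\sum_l b l) ^+ 2 <= n%:R * \sum_l b l ^+ 2.
Proof.
pose bv : 'cV[R]_n := \col_l b l; pose one : 'cV[R]_n := const_mx 1.
have -> : \sum_l b l = dotp one bv by apply: eq_bigr => l _; rewrite !mxE mul1r.
have -> : \sum_l b l ^+ 2 = dotp bv bv by apply: eq_bigr => l _; rewrite !mxE expr2.
have -> : n%:R = dotp one one :> R.
  by rewrite /dotp (eq_bigr (fun _ => 1)) ?sumr_const ?card_ord // => l _; rewrite !mxE mulr1.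
rewrite -!sqr_enorm -exprMn -real_normK ?num_real // lerXn2r ?nnegrE ?normr_dotp_le //.
by rewrite mulr_ge0 ?enorm_ge0.
Qed.

Section LineDerivative.
Variable R : realType.

Lemma is_derive_line (V W : normedModType R) (g : V -> W) (y u : V) (t : R) :
  differentiable g (y + t *: u) ->
  is_derive t 1 (fun s => g (y + s *: u)) ('d g (y + t *: u) u).
Proof.
move=> dg.
have dline : is_diff t (cst y + *:%R ^~ u) (0 + *:%R ^~ u) by exact: is_diffD.
have dgline := is_diff_comp dline (differentiableP dg).
apply: DeriveDef; first exact/diff_derivable/ex_diff.
by rewrite deriveE ?diff_val //= add0r scale1r.
Qed.

Lemma diff_coord m n (N0 : 'M[R]_(m, n)) i j :
  'd (fun N : 'M[R]_(m, n) => N i j) N0 = (fun N => N i j) :> (_ -> _).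
Proof.
have coord_linear : linear (fun N : 'M[R]_(m, n) => N i j) by move=> a A B; rewrite !mxE.
pose coord : {linear 'M[R]_(m, n) -> R} :=
  HB.pack (fun N : 'M[R]_(m, n) => N i j) (GRing.isLinear.Build _ _ _ _ _ coord_linear).
by rewrite -[fun _ => _]/(coord : _ -> _) diff_lin //; exact: coord_continuous.
Qed.

Lemma is_derive_coord m n (h : R -> 'M[R]_(m, n)) (t : R) (dh : 'M[R]_(m, n)) i j :
  is_derive t 1 h dh -> is_derive t 1 (fun s => h s i j) (dh i j).
Proof.
move=> hd; have dht : differentiable h t by apply/derivable1_diffP.
have dcoord : differentiable ((fun N : 'M[R]_(m, n) => N i j) \o h) t.
  exact/differentiable_comp/differentiable_coord.
apply: DeriveDef; first exact: diff_derivable.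
rewrite -[fun s => _]/((fun N : 'M[R]_(m, n) => N i j) \o h) deriveE //.
rewrite diff_comp ?diff_coord //=; last exact: differentiable_coord.
by rewrite -deriveE // derive_val.
Qed.

Lemma is_derive_dotpr d (e : 'cV[R]_d) (h : R -> 'cV[R]_d) (t : R) (dh : 'cV[R]_d) :
  is_derive t 1 h dh -> is_derive t 1 (fun s => dotp e (h s)) (dotp e dh).
Proof.
move=> hd; rewrite /dotp.
have -> : (fun s => \sum_i e i 0 * h s i 0) = \sum_i (e i 0 \*: (fun s => h s i 0)).
  by rewrite fct_sumE.
apply: is_derive_sum => i; apply: is_deriveZ; exact: is_derive_coord.
Qed.

End LineDerivative.

Lemma taylor1_le (R : realType) (phi dphi : R -> R) (L : R) :
  (forall r : R, is_derive r 1 phi (dphi r)) ->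
  (forall r, 0 <= r <= 1 -> dphi r - dphi 0 <= L * r) ->
  phi 1 - phi 0 - dphi 0 <= L / 2.
Proof.
move=> phi_deriv dphi_le.
(* Built from [id] and [cst] so that the [is_derive] instances compute [psi']. *)
pose psi : R -> R := phi - ((id * cst (dphi 0) + cst (L / 2) * (id * id)) : R -> R).
have dpsi (r : R) : is_derive r 1 psi (dphi r - (dphi 0 + L * r)).
  apply: is_derive_eq; rewrite !scaler0 addr0 /= /GRing.scale /= !mulr1.
  by congr (_ - _); field.
have [c /[!in_itv]/= /andP[c0 c1]] := MVT_segment ler01 (fun r _ => dpsi r)
  (derivable_within_continuous (fun r _ => @ex_derive _ _ _ _ _ _ _ (dpsi r))).
have psiE r : psi r = phi r - (r * dphi 0 + L / 2 * (r * r)) by [].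
rewrite !psiE; have := dphi_le c; rewrite c0 c1 => /(_ isT); lra.
Qed.

Lemma weighted_centered (R : pzRingType) (V : lmodType R) n (w : nat -> R) (p : nat -> V) :
  \sum_(i < n) w i = 1 -> \sum_(i < n) w i *: (p i - \sum_(j < n) w j *: p j) = 0.
Proof.
move=> w1; under eq_bigr do rewrite scalerBr.
by rewrite sumrB -scaler_suml w1 scale1r subrr.
Qed.

Lemma wsum_linearization (R : comPzRingType) m n (w : nat -> R) (H : 'M[R]_(m, n))
    (x : nat -> 'cV[R]_n) (g : nat -> 'cV[R]_m) (g0 : 'cV[R]_m) k :
  \sum_(i < k) w i = 1 ->
  \sum_(i < k) w i *: (g i - g0 - H *m (x i - \sum_(j < k) w j *: x j)) =
    \sum_(i < k) w i *: g i - g0.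
Proof.
move=> w1; under eq_bigr do rewrite !scalerBr scalemxAr.
by rewrite !sumrB -scaler_suml w1 scale1r -mulmx_sumr weighted_centered // mulmx0 subr0.
Qed.

Section GradientTaylor.
Variables (R : realType) (d : nat).
Notation vec := 'cV[R]_d.
Variable f : vec -> R.

Lemma hess_mulmx x (u : vec) : hess f x *m u = 'd (grad f) x u.
Proof.
apply/matrixP => i j; rewrite (ord1 j) {j} mxE.
rewrite [in RHS](_ : u = \sum_k u k 0 *: (delta_mx k 0 : vec)); last first.
  by rewrite {1}(matrix_sum_delta u); apply: eq_bigr => k _; rewrite big_ord1.
rewrite linear_sum summxE; apply: eq_bigr => k _.
by rewrite linearZ !mxE mulrC.
Qed.

Variable M : R.
Hypothesis f2 : twice_differentiable f.
Hypothesis M_ge0 : 0 <= M.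
Hypothesis hess_lip : forall y z : vec, opnorm (hess f y - hess f z) <= M * enorm (y - z).

Lemma grad_taylor_le y z :
  enorm (grad f z - grad f y - hess f y *m (z - y)) <= M / 2 * enorm (z - y) ^+ 2.
Proof.
set u := z - y; set e := grad f z - grad f y - hess f y *m u.
(* Testing grad f along [y, z] against the remainder e itself makes the left-hand side of
   [taylor1_le] equal to |e|^2. *)
pose phi r := dotp e (grad f (y + r *: u)).
pose dphi r := dotp e (hess f (y + r *: u) *m u).
have phi_deriv (r : R) : is_derive r 1 phi (dphi r).
  rewrite /dphi hess_mulmx; apply: is_derive_dotpr; apply: is_derive_line.
  exact: (f2 _).2.
have dphi_le r : 0 <= r <= 1 -> dphi r - dphi 0 <= enorm e * M * enorm u ^+ 2 * r.
  move=> /andP[r_ge0 _]; rewrite /dphi -dotpBr -mulmxBl scale0r addr0.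
  apply: (le_trans (dotp_le_enorm _ _)); rewrite -!mulrA ler_wpM2l ?enorm_ge0 //.
  apply: (le_trans (enorm_mulmx_le _ _)).
  have := hess_lip (y + r *: u) y; rewrite [y + _ - y]addrC addKr enormZ ger0_norm // => lip.
  apply: (le_trans (ler_wpM2r (enorm_ge0 _) lip)).
  lra.
have := taylor1_le phi_deriv dphi_le.
have yuz : y + u = z by rewrite addrC subrK.
rewrite /phi /dphi scale0r scale1r !addr0 yuz -!dotpBr -/e -sqr_enorm => taylor.
have [e0|e_neq0] := eqVneq (enorm e) 0; first by rewrite e0 mulr_ge0 ?divr_ge0 ?sqr_ge0.
have e_gt0 : 0 < enorm e by rewrite lt_def e_neq0 enorm_ge0.
by rewrite -(ler_pM2l e_gt0) -expr2; lra.
Qed.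

Lemma enorm_grad_wmean_le n (w : nat -> R) (x : nat -> vec) :
  (forall i, 0 <= w i) -> \sum_(i < n) w i = 1 ->
  enorm (grad f (\sum_(i < n) w i *: x i)) <=
    enorm (\sum_(i < n) w i *: grad f (x i)) +
    M / 2 * \sum_(i < n) w i * enorm (x i - \sum_(j < n) w j *: x j) ^+ 2.
Proof.
move=> w_ge0 w1; set xb := \sum_(j < n) w j *: x j.
pose err i := grad f (x i) - grad f xb - hess f xb *m (x i - xb).
have -> : grad f xb = \sum_(i < n) w i *: grad f (x i) - \sum_(i < n) w i *: err i.
  have := wsum_linearization (hess f xb) x (fun i => grad f (x i)) (grad f xb) w1.
  by rewrite -/xb => ->; rewrite opprB addrC subrK.
rewrite (le_trans (ler_enormD _ _)) // enormN lerD2l mulr_sumr.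
rewrite (le_trans (ler_enorm_sum _ _ _)) //; apply: ler_sum => i _.
by rewrite enormZ ger0_norm // mulrCA ler_wpM2l //; exact: grad_taylor_le.
Qed.

End GradientTaylor.

Section WeightedVariance.
Variables (R : realType) (d : nat).
Notation vec := 'cV[R]_d.

Lemma wvariance_pairwise n (w : nat -> R) (p : nat -> vec) :
  \sum_(i < n) w i = 1 ->
  2 * \sum_(i < n) w i * enorm (p i - \sum_(j < n) w j *: p j) ^+ 2 =
  \sum_(i < n) \sum_(j < n) w i * w j * enorm (p i - p j) ^+ 2.
Proof.
move=> w1; set pb := \sum_(j < n) w j *: p j.
pose q i := p i - pb; pose Q i := dotp (q i) (q i).
have pq i j : p i - p j = q i - q j by rewrite /q opprB addrA subrK.
have V_Q : \sum_(i < n) w i * enorm (p i - pb) ^+ 2 = \sum_(j < n) w j * Q j.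
  by apply: eq_bigr => j _; rewrite sqr_enorm.
have row i : \sum_(j < n) w j * enorm (p i - p j) ^+ 2 = Q i + \sum_(j < n) w j * Q j.
  rewrite (eq_bigr (fun j : 'I_n => w j * Q i - 2 * dotp (q i) (w j *: q j) + w j * Q j)).
    rewrite big_split sumrB /= -mulr_suml w1 mul1r -mulr_sumr -dotp_sumr.
    by rewrite weighted_centered // dotp0r mulr0 subr0.
  move=> j _; rewrite pq sqr_enorm /Q; move: (q i) (q j) => a b.
  by rewrite dotpBl !dotpBr dotpZr (dotpC b a); ring.
rewrite V_Q [RHS](eq_bigr (fun i : 'I_n => w i * Q i + w i * \sum_(j < n) w j * Q j)).
  by rewrite big_split /= -mulr_suml w1 mul1r mulr_natl mulr2n.
by move=> i _; rewrite -mulrDr -row mulr_sumr; apply: eq_bigr => j _; rewrite mulrA.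
Qed.

Definition separates (l i j : nat) : R := (i <= l)%:R * (l < j)%:R + (j <= l)%:R * (l < i)%:R.

Lemma sum_separates_le n (w : nat -> R) l :
  \sum_(i < n) w i = 1 -> \sum_(i < n) \sum_(j < n) w i * w j * separates l i j <= 2^-1.
Proof.
move=> w1; pose A := \sum_(i < n) w i * (i <= l)%:R; pose B := \sum_(i < n) w i * (l < i)%:R.
have AB : A + B = 1.
  rewrite -big_split -[in RHS]w1; apply: eq_bigr => i _ /=.
  by rewrite -mulrDr -natrD; case: leqP => _; rewrite mulr1.
have cross (F G : nat -> R) : \sum_(i < n) \sum_(j < n) w i * w j * (F i * G j) =
    (\sum_(i < n) w i * F i) * (\sum_(j < n) w j * G j).
  by rewrite big_distrlr; apply: eq_bigr => i _; apply: eq_bigr => j _; rewrite mulrACA.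
rewrite /separates; under eq_bigr do under eq_bigr do rewrite mulrDr.
rewrite (eq_bigr _ (fun i _ => big_split _ _ _ _ _)) big_split /=.
rewrite [X in _ + X]exchange_big /=.
under [X in _ + X]eq_bigr do under eq_bigr do rewrite [w _ * w _]mulrC.
rewrite !(cross (fun i => (i <= l)%:R) (fun j => (l < j)%:R)) -/A -/B.
have := sqr_ge0 (A - B); nra.
Qed.

Variables (p s : nat -> vec) (k : nat).
Hypothesis p_step : forall l, p l.+1 = p l + s l.

Lemma sqr_enorm_sub_le i j : (i <= k)%N -> (j <= k)%N ->
  enorm (p i - p j) ^+ 2 <= k%:R * \sum_(l < k) separates l i j * enorm (s l) ^+ 2.
Proof.
wlog ij : i j / (i <= j)%N.
  move=> H ik jk; have [/H|/ltnW ji] := leqP i j; first exact.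
  by rewrite enorm_distC; under eq_bigr do rewrite [separates _ _ _]addrC; exact: H.
move=> _ jk; pose c (l : nat) : R := ((i <= l) && (l < j))%N%:R.
have sep_c l : separates l i j = c l.
  rewrite /separates /c -!natrM !mulnb.
  have -> : (j <= l < i)%N = false by apply/negbTE/andP => -[]; lia.
  by rewrite addr0.
have path : p j - p i = \sum_(l < k) c l *: s l.
  rewrite -(@telescope_sumr_eq _ _ _ p s ij) => [|l _]; last by rewrite p_step addrAC subrr add0r.
  rewrite (big_nat_widen _ _ _ _ _ jk) (big_nat_widenl _ _ _ _ _ (leq0n i)) big_mkcond big_mkord.
  by apply: eq_bigr => l _; rewrite /c andbC; case: ifP => _; rewrite ?scale1r ?scale0r.
have path_le : enorm (p j - p i) <= \sum_(l < k) c l * enorm (s l).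
  rewrite path (le_trans (ler_enorm_sum _ _ _)) //.
  by under eq_bigr do rewrite enormZ normr_nat.
rewrite enorm_distC; under eq_bigr do rewrite sep_c.
have := ler_pM (enorm_ge0 _) (enorm_ge0 _) path_le path_le; rewrite -!expr2 => /le_trans.
apply; apply: le_trans (sqr_sum_le _) _.
have c_sqr l : c l ^+ 2 = c l by rewrite /c; case: (_ && _); rewrite ?expr1n ?expr0n.
rewrite ler_wpM2l //; apply: ler_sum => l _.
by rewrite exprMn c_sqr.
Qed.

Lemma wvariance_path_le (w : nat -> R) :
  (forall i, 0 <= w i) -> \sum_(i < k.+1) w i = 1 ->
  \sum_(i < k.+1) w i * enorm (p i - \sum_(j < k.+1) w j *: p j) ^+ 2
    <= k%:R / 4 * \sum_(l < k) enorm (s l) ^+ 2.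
Proof.
move=> w_ge0 w1; rewrite -(ler_pM2l (ltr0n _ 2)) wvariance_pairwise //.
apply: (@le_trans _ _ (\sum_(i < k.+1) \sum_(j < k.+1)
    w i * w j * (k%:R * \sum_(l < k) separates l i j * enorm (s l) ^+ 2))).
  apply: ler_sum => i _; apply: ler_sum => j _.
  by rewrite ler_wpM2l ?mulr_ge0 // sqr_enorm_sub_le // -ltnS.
rewrite [leLHS](_ : _ = \sum_(l < k) k%:R * enorm (s l) ^+ 2 *
    \sum_(i < k.+1) \sum_(j < k.+1) w i * w j * separates l i j); last first.
  under eq_bigr do under eq_bigr do rewrite mulr_sumr mulr_sumr.
  under eq_bigr do rewrite exchange_big /=.
  rewrite exchange_big /=; apply: eq_bigr => l _; rewrite mulr_sumr; apply: eq_bigr => i _.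
  by rewrite mulr_sumr; apply: eq_bigr => j _; ring.
apply: (@le_trans _ _ (\sum_(l < k) k%:R * enorm (s l) ^+ 2 * 2^-1)).
  apply: ler_sum => l _; rewrite ler_wpM2l ?mulr_ge0 ?enorm_ge0 //.
  exact: sum_separates_le.
rewrite -big_distrl -big_distrr /=; lra.
Qed.

End WeightedVariance.

Section XbarWeights.
Variable R : realFieldType.

Definition xbar_weight (k i : nat) : R :=
  (if (i < k)%N then (2 * i + 1)%:R else k%:R) / (k * k.+1)%:R.

Lemma xbar_weight_ge0 k i : 0 <= xbar_weight k i.
Proof. by rewrite divr_ge0 //; case: ifP. Qed.

Lemma sum_xbar_weight k : (0 < k)%N -> \sum_(i < k.+1) xbar_weight k i = 1.
Proof.
move=> k_gt0; have sum_odd j : (\sum_(i < j) (2 * i + 1) = j * j)%N.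
  by elim: j => [|j IHj]; rewrite ?big_ord0 // big_ord_recr /= IHj; lia.
rewrite big_ord_recr /= /xbar_weight ltnn; under eq_bigr do rewrite ltn_ord.
rewrite -mulr_suml -mulrDl -natr_sum -natrD sum_odd -mulnSr divff //.
by rewrite pnatr_eq0 muln_eq0 negb_or -!lt0n k_gt0.
Qed.

Lemma xbar_weightE (V : lmodType R) k (p : nat -> V) :
  ((k * k.+1)%:R)^-1 *: (\sum_(i < k) (2 * i + 1)%:R *: p i + k%:R *: p k) =
    \sum_(i < k.+1) xbar_weight k i *: p i.
Proof.
rewrite big_ord_recr /= scalerDr scaler_sumr /xbar_weight ltnn scalerA mulrC.
by congr (_ + _); apply: eq_bigr => i _; rewrite ltn_ord scalerA mulrC.
Qed.

End XbarWeights.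

Theorem lemma4p2 (R : realType) (d : nat) (f : 'cV[R]_d -> R) (M : R)
  (sigma delta theta : R) (x s : nat -> 'cV[R]_d) (B : nat -> 'M[R]_d) :
  twice_differentiable f ->
  0 < M ->
  (forall y z : 'cV[R]_d, opnorm (hess f y - hess f z) <= M * enorm (y - z)) ->
  0 < sigma -> 0 < delta -> 0 < theta < 1 ->
  inner_iteration f sigma delta theta x s B ->
  forall k : nat, (1 <= k)%N ->
    enorm (grad f (xbar x k))
      <= enorm (gbar f x k) + M / 8 * k%:R * Ssum s k.
Proof.
move=> f2 M_gt0 hess_lip _ _ _ [_ _ x_step _] k k_gt0.
have w_ge0 := @xbar_weight_ge0 R k; have w1 := sum_xbar_weight R k_gt0.
rewrite /xbar /gbar xbar_weightE (xbar_weightE _ (fun i => grad f (x i))) /Ssum.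
apply: (le_trans (enorm_grad_wmean_le f2 (ltW M_gt0) hess_lip _ w_ge0 w1)).
rewrite lerD2l; have := wvariance_path_le x_step w_ge0 w1.
move/(ler_wpM2l (divr_ge0 (ltW M_gt0) (ler0n _ 2)))/le_trans; apply; lra.
Qed.
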